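(* Let $\bar t>0$, $I=(0,\bar t)$, let $\gamma_1,\gamma_2\in\mathrm{Lip}(I)$ (extended continuously to $\bar I$) with $\gamma_1<0<\gamma_2$ on $I$ and $\gamma_1(0)=\gamma_1(\bar t)=\gamma_2(0)=\gamma_2(\bar t)=0$, let $D=\{(y,t)\in\mathbb W: t\in I,\ \gamma_1(t)<y<\gamma_2(t)\}$, and let $\phi\in C(\partial D)$ with $\phi_1,\phi_2\in\mathrm{Lip}(I)$. Assume $\zeta<1$. Then there exists a bi-Lipschitz increasing function $\lambda:\bar I\to\bar I$ such that: (i) $p_2(\lambda(s))-p_1(s)\in H_{p_1(s)}$ for all $s\in\bar I$; (ii) for all $s,\lambda'\in\bar I$, if $p_2(\lambda')-p_1(s)\in H_{p_1(s)}$ then $\lambda'=\lambda(s)$; (iii) $\lambda(0)=0$ and $\lambda(\bar t)=\bar t$; (iv) $\frac{1-\zeta}{1+\zeta}\le\mathrm{Lip}(\lambda)\le\frac{1+\zeta}{1-\zeta}$ and $\frac{1-\zeta}{1+\zeta}\le\mathrm{Lip}(\lambda^{-1})\le\frac{1+\zeta}{1-\zeta}$.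
   Context: $\mathbb H$ is $\mathbb R^3$ with product $(x,y,t)\cdot(\xi,\eta,\tau)=(x+\xi,y+\eta,t+\tau+2(y\xi-x\eta))$; $X=\partial_x+2y\partial_t$, $Y=\partial_y-2x\partial_t$, and $H_p=\mathrm{span}\{X(p),Y(p)\}$ (a linear subspace of $\mathbb R^3$). $\mathbb W=\{x=0\}$ with coordinates $(y,t)$. Set $\phi_i(s)=\phi(\gamma_i(s),s)$, $\|\gamma\|_\infty=\max_i\|\gamma_i\|_\infty$, $\mathrm{Lip}(\gamma)=\max_i\mathrm{Lip}(\gamma_i)$, $\|\phi\|_\infty=\max_i\|\phi_i\|_\infty$, $\mathrm{Lip}(\phi)=\max_i\mathrm{Lip}(\phi_i)$, $\zeta=4(\|\gamma\|_\infty+\mathrm{Lip}(\gamma))(\|\phi\|_\infty+\mathrm{Lip}(\phi))$, and $p_i(s)=(\phi_i(s),\gamma_i(s),s+2\gamma_i(s)\phi_i(s))$ for $s\in\bar I$, $i=1,2$. *)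

From HB Require Import structures.
From mathcomp Require Import all_boot all_order all_algebra.
From mathcomp Require Import all_classical all_reals all_analysis.
Set Implicit Arguments. Unset Strict Implicit. Unset Printing Implicit Defensive.
Import Order.TTheory GRing.Theory Num.Theory.
Import numFieldNormedType.Exports.
Local Open Scope classical_set_scope.
Local Open Scope ring_scope.

Section Defs.
Variable R : realType.

(* Points of the Heisenberg group H = R^3, written (x, y, t). *)
Definition hpt := (R * R * R)%type.

Definition hsub (p q : hpt) : hpt :=
  (p.1.1 - q.1.1, p.1.2 - q.1.2, p.2 - q.2).

(* X(p) = d_x + 2y d_t, Y(p) = d_y - 2x d_t, as vectors of R^3. *)
Definition Xvec (p : hpt) : hpt := (1, 0, 2 * p.1.2).
Definition Yvec (p : hpt) : hpt := (0, 1, - (2 * p.1.1)).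

Definition in_horiz (p v : hpt) : Prop :=
  exists a b : R, v = (a * (Xvec p).1.1 + b * (Yvec p).1.1,
                       a * (Xvec p).1.2 + b * (Yvec p).1.2,
                       a * (Xvec p).2 + b * (Yvec p).2).

Definition supnorm (f : R -> R) (A : set R) : R := sup [set `|f x| | x in A].

Definition lipc (f : R -> R) (A : set R) : R :=
  sup [set r | exists x y, A x /\ A y /\ x != y /\ r = `|f x - f y| / `|x - y|].

Definition is_lip_on (f : R -> R) (A : set R) : Prop :=
  exists k : R, forall x y, A x -> A y -> `|f x - f y| <= k * `|x - y|.

(* topological boundary of a subset of W = R^2 (coordinates (y,t)) *)
Definition bdry (A : set (R * R)) : set (R * R) := closure A `\` interior A.

Definition domD (tbar : R) (g1 g2 : R -> R) : set (R * R) :=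
  [set q | 0 < q.2 < tbar /\ g1 q.2 < q.1 < g2 q.2].

Definition pcurve (phii gi : R -> R) (s : R) : hpt :=
  (phii s, gi s, s + 2 * gi s * phii s).

Definition Iopen (tbar : R) : set R := `]0, tbar[%classic.
Definition Iclosed (tbar : R) : set R := `[0, tbar]%classic.

End Defs.

From HB Require Import structures.
From mathcomp Require Import all_boot all_order all_algebra.
From mathcomp Require Import all_classical all_reals all_analysis.
From mathcomp Require Import ring lra.
Import Order.TTheory GRing.Theory Num.Theory.
Import numFieldNormedType.Exports.
Local Open Scope classical_set_scope.
Local Open Scope ring_scope.

(* For [p = p_1(s)] the vector [p_2(l) - p_1(s)] is horizontal iff
   [F(s, l) := l - s + 2 (gamma_2(l) - gamma_1(s)) (phi_2(l) + phi_1(s))] vanishes.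
   The functions gamma_i, phi_i are bounded and Lipschitz on the closed interval
   [0, tbar] with the constants measured on the open one (the open interval is
   dense, and phi is continuous on the boundary of D at the vertices (0, 0) and
   (0, tbar)), so the product term of F is zeta-Lipschitz in (s, l): F is a
   zeta-perturbation of [l - s].  Hence F(s, .) increases with slope at least
   1 - zeta and changes sign on [0, tbar], so it has a unique zero lambda(s);
   subtracting F(s, lambda(s)) = F(s', lambda(s')) = 0 gives
   (1 - zeta) |dlambda| <= (1 + zeta) |ds| and (1 - zeta) |ds| <= (1 + zeta) |dlambda|,
   and F(0, 0) = F(tbar, tbar) = 0 forces lambda(0) = 0, lambda(tbar) = tbar. *)

Section RealLipschitz.
Context {R : realType}.
Implicit Types (A B : set R) (f : R -> R) (a b c k M : R).

Lemma klipschitzP A k f :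
  k.-lipschitz_A f <-> forall x y, A x -> A y -> `|f x - f y| <= k * `|x - y|.
Proof. by split=> [h x y Ax Ay | h [x y] [/= Ax Ay]]; [exact: (h (x, y)) | exact: h]. Qed.

Lemma is_lip_onP A f : is_lip_on f A <-> exists k, k.-lipschitz_A f.
Proof. by split=> -[k hk]; exists k; apply/klipschitzP. Qed.

Lemma klipschitz_le {A k k' f} : k <= k' -> k.-lipschitz_A f -> k'.-lipschitz_A f.
Proof.
move=> kk' /klipschitzP hk; apply/klipschitzP => x y Ax Ay.
by apply: le_trans (hk x y Ax Ay) _; rewrite ler_wpM2r.
Qed.

Lemma klipschitz_within_continuous {A k f} : k.-lipschitz_A f -> {within A, continuous f}.
Proof.
move=> /klipschitzP hk; apply/subspace_continuousP => x Ax; apply/cvgrPdist_le => e e0.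
have k1 : 0 < `|k| + 1 by rewrite ltr_pwDr // normr_ge0.
rewrite near_withinE; near=> y => Ay.
apply: le_trans (hk x y Ax Ay) _.
have : `|x - y| <= e / (`|k| + 1).
  by near: y; apply: cvgr_dist_le => //; exact: divr_gt0.
rewrite ler_pdivlMr // => h.
have := normr_ge0 (x - y); have := normr_ge0 k; have := ler_norm k; nra.
Unshelve. all: by end_near.
Qed.

Lemma bounded_of_klipschitz {A k f a r} : A a -> (forall x, A x -> `|x - a| <= r) ->
  k.-lipschitz_A f -> exists M, forall x, A x -> `|f x| <= M.
Proof.
move=> Aa hr /klipschitzP hk; exists (`|f a| + `|k| * r) => x Ax.
have := hk x a Ax Aa; have := hr x Ax.
have := ler_normD (f x - f a) (f a); rewrite subrK.
have := ler_norm k; have := normr_ge0 (x - a); have := normr_ge0 k; nra.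
Qed.

Definition bounded_lipschitz A M k f :=
  [/\ 0 <= k, forall x, A x -> `|f x| <= M & k.-lipschitz_A f].

Lemma bounded_lipschitz_le {A M M' k k' f} : M <= M' -> k <= k' ->
  bounded_lipschitz A M k f -> bounded_lipschitz A M' k' f.
Proof.
move=> MM' kk' [k0 hM hk]; split; [exact: le_trans kk' | | exact: klipschitz_le hk].
by move=> x Ax; apply: le_trans (hM x Ax) MM'.
Qed.

Definition bilipschitz_on A c f := forall x y, A x -> A y ->
  c * `|x - y| <= `|f x - f y| <= c^-1 * `|x - y|.

Lemma bilipschitz_is_lip {A c f} : bilipschitz_on A c f -> is_lip_on f A.
Proof. by move=> hf; exists c^-1 => x y Ax Ay; case/andP: (hf x y Ax Ay). Qed.

Lemma bilipschitz_inverse {A c f} : 0 < c -> bilipschitz_on A c f ->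
  (forall s, A s -> A (f s)) -> (forall t, A t -> exists2 s, A s & f s = t) ->
  exists g, [/\ forall t, A t -> A (g t), forall t, A t -> f (g t) = t,
                forall s, A s -> g (f s) = s & bilipschitz_on A c g].
Proof.
move=> c0 hf fA onto.
pose g t := xget 0 [set s | A s /\ f s = t].
have gP t : A t -> A (g t) /\ f (g t) = t.
  move=> At; have [s As fs] := onto t At.
  by have := xgetPex 0 (ex_intro [set s | A s /\ f s = t] s (conj As fs)).
have f_inj s s' : A s -> A s' -> f s = f s' -> s = s'.
  move=> As As' e; have /andP[+ _] := hf s s' As As'.
  by rewrite e subrr normr0 pmulr_rle0 // normr_le0 subr_eq0 => /eqP.
exists g; split.
- by move=> t /gP[].
- by move=> t /gP[].
- by move=> s As; have [Ag e] := gP _ (fA s As); exact: f_inj.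
- move=> t t' At At'; have [Ag ft] := gP t At; have [Ag' ft'] := gP t' At'.
  have /andP[h1 h2] := hf _ _ Ag Ag'; rewrite ft ft' in h1 h2.
  by rewrite -ler_pdivlMl // h2 ler_pdivlMl.
Qed.

Section BestConstants.
Context {A : set R} {f : R -> R}.

Let quotients := [set r | exists x y, A x /\ A y /\ x != y /\ r = `|f x - f y| / `|x - y|].

Let quotients_ub k : k.-lipschitz_A f -> ubound quotients k.
Proof.
move=> /klipschitzP hk _ [x [y [Ax [Ay [xy ->]]]]].
by rewrite ler_pdivrMr ?normr_gt0 ?subr_eq0 //; exact: hk.
Qed.

Let quotients_mem x y : A x -> A y -> x != y -> quotients (`|f x - f y| / `|x - y|).
Proof. by move=> Ax Ay xy; exists x, y. Qed.

Lemma lipc_klipschitz : is_lip_on f A -> (lipc f A).-lipschitz_A f.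
Proof.
move=> /is_lip_onP[k hk]; apply/klipschitzP => x y Ax Ay.
have [->|xy] := eqVneq x y; first by rewrite !subrr normr0 mulr0.
rewrite -ler_pdivrMr ?normr_gt0 ?subr_eq0 //.
by apply: ub_le_sup; [exists k; exact: quotients_ub | exact: quotients_mem].
Qed.

Lemma lipc_ge0 {a b} : A a -> A b -> a != b -> is_lip_on f A -> 0 <= lipc f A.
Proof.
move=> Aa Ab ab /is_lip_onP[k hk]; rewrite /lipc.
apply: le_trans (ub_le_sup (ex_intro _ k (quotients_ub _ hk)) (quotients_mem _ _ Aa Ab ab)).
by rewrite divr_ge0.
Qed.

Lemma lipc_bilipschitz {c a b} : A a -> A b -> a != b -> bilipschitz_on A c f ->
  c <= lipc f A <= c^-1.
Proof.
move=> Aa Ab ab hf; rewrite /lipc.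
have ub : ubound quotients c^-1.
  by apply: quotients_ub; apply/klipschitzP => x y Ax Ay; case/andP: (hf x y Ax Ay).
apply/andP; split.
  apply: le_trans (ub_le_sup (ex_intro _ _ ub) (quotients_mem _ _ Aa Ab ab)).
  by rewrite ler_pdivlMr ?normr_gt0 ?subr_eq0 //; case/andP: (hf a b Aa Ab).
by apply: ge_sup ub; exists (`|f a - f b| / `|a - b|); exact: quotients_mem.
Qed.

Lemma supnorm_ub {M} :
  (forall x, A x -> `|f x| <= M) -> forall x, A x -> `|f x| <= supnorm f A.
Proof.
move=> hM x Ax; apply: ub_le_sup; last by exists x.
by exists M => _ [y Ay <-]; exact: hM.
Qed.

End BestConstants.

Definition graph_dense A B f := forall x, B x -> forall e, 0 < e ->
  exists s, A s /\ `|s - x| < e /\ `|f s - f x| < e.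

Lemma graph_dense_bound {A B f M} : graph_dense A B f ->
  (forall x, A x -> `|f x| <= M) -> forall x, B x -> `|f x| <= M.
Proof.
move=> dense hM x Bx; apply/ler_addgt0Pr => e e0.
have [s [As [_ hs]]] := dense x Bx e e0.
have := hM s As; have := ler_normD (f x - f s) (f s); rewrite subrK distrC; lra.
Qed.

Lemma graph_dense_klipschitz {A B f k} : 0 <= k -> graph_dense A B f ->
  k.-lipschitz_A f -> k.-lipschitz_B f.
Proof.
move=> k0 dense /klipschitzP hk; apply/klipschitzP => x y Bx By.
apply/ler_addgt0Pr => e e0.
set d := e / (3 + 3 * k).
have d0 : 0 < d by apply: divr_gt0 => //; lra.
have de : d * (3 + 3 * k) = e by rewrite /d divfK //; apply/eqP; lra.
have [s [As [xs fxs]]] := dense x Bx d d0.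
have [s' [As' [ys fys]]] := dense y By d d0.
have fss := hk s s' As As'.
have tri_f : `|f x - f y| <= `|f s - f x| + `|f s - f s'| + `|f s' - f y|.
  have -> : f x - f y = - (f s - f x) + (f s - f s') + (f s' - f y) by ring.
  rewrite -(normrN (f s - f x)); apply: le_trans (ler_normD _ _) _.
  by rewrite lerD2r ler_normD.
have tri_s : `|s - s'| <= `|s - x| + `|x - y| + `|s' - y|.
  have -> : s - s' = (s - x) + (x - y) - (s' - y) by ring.
  by apply: le_trans (ler_normD _ _) _; rewrite normrN lerD2r ler_normD.
have := ler_wpM2l k0 tri_s.
have : k * `|s - x| <= k * d by apply: ler_wpM2l => //; exact: ltW.
have : k * `|s' - y| <= k * d by apply: ler_wpM2l => //; exact: ltW.
nra.
Qed.

End RealLipschitz.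

Lemma within_continuous_ball {R : realType} {T : pseudoMetricType R} {A : set T}
    {f : T -> R} {x} {e : R} :
  {within A, continuous f} -> A x -> 0 < e ->
  exists2 d : R, 0 < d & forall y, A y -> ball x d y -> `|f x - f y| < e.
Proof.
move=> /subspace_continuousP cf Ax e0.
move: (cf x Ax) => /cvgr_dist_lt/(_ _ e0)/nbhs_ballP[d d0 hd].
by exists d => // y Ay bxy; exact: hd y bxy Ay.
Qed.

Section Interval.
Context {R : realType} {tbar : R}.
Hypothesis tbar_gt0 : 0 < tbar.
Local Notation I := (Iclosed tbar).
Local Notation Io := (Iopen tbar).

Lemma IclosedP x : I x <-> 0 <= x <= tbar.
Proof. by rewrite /Iclosed /= in_itv. Qed.

Lemma IopenP x : Io x <-> 0 < x < tbar.
Proof. by rewrite /Iopen /= in_itv. Qed.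

Lemma Iclosed0 : I 0.
Proof. by apply/IclosedP; rewrite lexx ltW. Qed.

Lemma Iclosed_tbar : I tbar.
Proof. by apply/IclosedP; rewrite lexx ltW. Qed.

Lemma Iopen_Iclosed {x} : Io x -> I x.
Proof. by move/IopenP => /andP[? ?]; apply/IclosedP; apply/andP; split; lra. Qed.

Lemma Iopen_dense {x d} : I x -> 0 < d -> exists s, Io s /\ `|s - x| < d.
Proof.
move=> /IclosedP /andP[x0 xt] d0.
set m := Num.min d tbar.
have m0 : 0 < m by rewrite lt_min d0 tbar_gt0.
have md : m <= d by rewrite ge_min lexx.
have mt : m <= tbar by rewrite ge_min lexx orbT.
have [xl|xr] := leP x (tbar / 2).
  exists (x + m / 4); split; first by apply/IopenP; apply/andP; split; lra.
  by rewrite addrC addKr gtr0_norm; lra.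
exists (x - m / 4); split; first by apply/IopenP; apply/andP; split; lra.
by rewrite addrC addKr normrN gtr0_norm; lra.
Qed.

Lemma Iopen_lipc_ge0 {f} : is_lip_on f Io -> 0 <= lipc f Io.
Proof.
have := tbar_gt0 => t0.
have q1 : Io (tbar / 4) by apply/IopenP; apply/andP; split; lra.
have q2 : Io (tbar / 2) by apply/IopenP; apply/andP; split; lra.
by apply: lipc_ge0 q1 q2 _; rewrite lt_eqF //; lra.
Qed.

Lemma Iopen_bounds {f} : is_lip_on f Io -> graph_dense Io I f ->
  bounded_lipschitz I (supnorm f Io) (lipc f Io) f.
Proof.
move=> lip dense; have hk := lipc_klipschitz lip; have := tbar_gt0 => t0.
have k0 := Iopen_lipc_ge0 lip.
split=> //; last exact: graph_dense_klipschitz k0 dense hk.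
have mid : Io (tbar / 2) by apply/IopenP; apply/andP; split; lra.
have [M hM] : exists M, forall x, Io x -> `|f x| <= M.
  apply: (bounded_of_klipschitz (r := tbar / 2) mid _ hk) => x /IopenP /andP[? ?].
  by rewrite ler_norml; apply/andP; split; lra.
exact: graph_dense_bound dense (supnorm_ub hM).
Qed.

Lemma graph_dense_continuous {f} : {within I, continuous f} -> graph_dense Io I f.
Proof.
move=> cf x Ix e e0.
have [d d0 hd] := within_continuous_ball cf Ix e0.
have [s [Ios]] : exists s, Io s /\ `|s - x| < Num.min d e.
  by apply: Iopen_dense Ix _; rewrite lt_min d0 e0.
rewrite lt_min => /andP[sd se].
exists s; split=> //; split=> //.
by rewrite distrC; apply: hd (Iopen_Iclosed Ios) _; rewrite /ball /= distrC.
Qed.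

Lemma graph_dense_trace {B : set (R * R)} {g : R -> R} {phi : R * R -> R} :
  g 0 = 0 -> g tbar = 0 -> {within I, continuous g} -> {within B, continuous phi} ->
  B (0, 0) -> B (0, tbar) -> (forall s, Io s -> B (g s, s)) ->
  graph_dense Io I (fun s => phi (g s, s)).
Proof.
move=> g0 gt cg cphi B0 Bt Bg x Ix e e0.
have [x_in|[gx Bx]] : Io x \/ (g x = 0 /\ B (0, x)).
  move/IclosedP: (Ix) => /andP[x0 xt].
  have [->|x_ne0] := eqVneq x 0; first by right.
  have [->|x_nt] := eqVneq x tbar; first by right.
  by left; apply/IopenP; rewrite !lt_neqAle eq_sym x_ne0 x_nt x0 xt.
  by exists x; rewrite !subrr normr0.
have [d1 d10 near_phi] := within_continuous_ball cphi Bx e0.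
have [d2 d20 near_g] := within_continuous_ball cg Ix d10.
have [s [Ios]] : exists s, Io s /\ `|s - x| < Num.min (Num.min d1 d2) e.
  by apply: Iopen_dense Ix _; rewrite !lt_min d10 d20 e0.
rewrite !lt_min => /andP[/andP[sd1 sd2] se].
exists s; split=> //; split=> //=.
rewrite gx distrC; apply: near_phi (Bg s Ios) _; split; rewrite /ball /=.
  by rewrite -gx; apply: near_g (Iopen_Iclosed Ios) _; rewrite /ball /= distrC.
by rewrite distrC.
Qed.

End Interval.

Lemma bdry_segment {R : realType} {D : set (R * R)} {p v : R * R} {a : R} :
  0 < a -> `|v.1| <= 1 -> `|v.2| <= 1 ->
  (forall e, 0 < e < a -> D (p.1 + e * v.1, p.2 + e * v.2)) ->
  (forall e, 0 < e -> ~ D (p.1 - e * v.1, p.2 - e * v.2)) -> bdry D p.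
Proof.
move=> a0 v1 v2 inD outD.
have shift_lt (y w e r : R) : 0 < e -> e < r -> `|w| <= 1 ->
    `|y - (y + e * w)| < r /\ `|y - (y - e * w)| < r.
  move=> e0 er w1; rewrite opprD addNKr normrN opprB addrC subrK normrM gtr0_norm //.
  by split; nra.
have shift_ball e r : 0 < e -> e < r ->
    ball p r (p.1 + e * v.1, p.2 + e * v.2) /\ ball p r (p.1 - e * v.1, p.2 - e * v.2).
  move=> e0 er; have [h1 h1'] := shift_lt p.1 _ _ _ e0 er v1.
  by have [h2 h2'] := shift_lt p.2 _ _ _ e0 er v2.
split.
  move=> B /nbhs_ballP[r r0 rB].
  have mr : Num.min r a <= r by rewrite ge_min lexx.
  have ma : Num.min r a <= a by rewrite ge_min lexx orbT.
  have m0 : 0 < Num.min r a by rewrite lt_min r0 a0.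
  have m2 : 0 < Num.min r a / 2 by lra.
  exists (p.1 + Num.min r a / 2 * v.1, p.2 + Num.min r a / 2 * v.2); split.
    by apply: inD; rewrite m2 /=; lra.
  by apply: rB; case: (shift_ball _ r m2 ltac:(lra)).
move=> /nbhs_ballP[r r0 rB].
have r2 : 0 < r / 2 by rewrite divr_gt0.
apply: (outD (r / 2) r2); apply: rB.
by case: (shift_ball (r / 2) r r2 ltac:(lra)).
Qed.

Section DomainBoundary.
Context {R : realType} {tbar : R} {g1 g2 : R -> R}.
Hypothesis tbar_gt0 : 0 < tbar.
Hypothesis g_sign : forall s, Iopen tbar s -> g1 s < 0 < g2 s.
Local Notation D := (domD tbar g1 g2).

Lemma bdry_domD_graph1 s : Iopen tbar s -> bdry D (g1 s, s).
Proof.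
move=> Is; have /andP[g1s g2s] := g_sign s Is; move/IopenP: (Is) => /andP[s0 st].
apply: (@bdry_segment _ _ _ (1, 0) (- g1 s)); rewrite /= ?normr1 ?normr0 ?oppr_gt0 //.
  move=> e /andP[e0 ea]; rewrite mulr1 mulr0 addr0.
  by split; apply/andP; split => //=; lra.
by move=> e e0; rewrite mulr1 mulr0 subr0 => -[_ /= /andP[+ _]]; lra.
Qed.

Lemma bdry_domD_graph2 s : Iopen tbar s -> bdry D (g2 s, s).
Proof.
move=> Is; have /andP[g1s g2s] := g_sign s Is; move/IopenP: (Is) => /andP[s0 st].
apply: (@bdry_segment _ _ _ (-1, 0) (g2 s)); rewrite /= ?normrN ?normr1 ?normr0 //.
  move=> e /andP[e0 ea]; rewrite mulrN1 mulr0 addr0.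
  by split; apply/andP; split => //=; lra.
by move=> e e0; rewrite mulrN1 opprK mulr0 subr0 => -[_ /= /andP[_ +]]; lra.
Qed.

Lemma bdry_domD_bottom : bdry D (0, 0).
Proof.
have := tbar_gt0 => t0.
apply: (@bdry_segment _ _ _ (0, 1) tbar); rewrite /= ?normr1 ?normr0 //.
  move=> e /andP[e0 et]; rewrite mulr1 mulr0 !add0r.
  have Ie : Iopen tbar e by apply/IopenP; rewrite e0 et.
  by split; [rewrite /= e0 | exact: g_sign].
by move=> e e0; rewrite mulr1 sub0r => -[/= /andP[+ _] _]; lra.
Qed.

Lemma bdry_domD_top : bdry D (0, tbar).
Proof.
have := tbar_gt0 => t0.
apply: (@bdry_segment _ _ _ (0, -1) tbar); rewrite /= ?normrN ?normr1 ?normr0 //.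
  move=> e /andP[e0 et]; rewrite mulrN1 mulr0 add0r.
  have Ie : Iopen tbar (tbar - e) by apply/IopenP; apply/andP; split; lra.
  by split; [move/IopenP: Ie | exact: g_sign].
by move=> e e0; rewrite mulrN1 opprK => -[/= /andP[_ +] _]; lra.
Qed.

Lemma graph_dense_bdry_trace {phi : R * R -> R} :
  {within bdry D, continuous phi} -> forall g : R -> R, g 0 = 0 -> g tbar = 0 ->
  {within Iclosed tbar, continuous g} -> (forall s, Iopen tbar s -> bdry D (g s, s)) ->
  graph_dense (Iopen tbar) (Iclosed tbar) (fun s => phi (g s, s)).
Proof.
move=> cphi g g0 gt cg; apply: graph_dense_trace cg cphi _ _ => //.
  exact: bdry_domD_bottom.
exact: bdry_domD_top.
Qed.

End DomainBoundary.

Lemma normBM_le {R : numDomainType} {x y x' y' X Y dx dy : R} :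
  `|x'| <= X -> `|y| <= Y -> `|x - x'| <= dx -> `|y - y'| <= dy ->
  `|x * y - x' * y'| <= dx * Y + X * dy.
Proof.
move=> hx' hy hx hy'.
have -> : x * y - x' * y' = (x - x') * y + x' * (y - y') by ring.
apply: le_trans (ler_normD _ _) _; rewrite !normrM.
by apply: lerD; apply: ler_pM; rewrite ?normr_ge0.
Qed.

Section Horizontality.
Context {R : realType} (g1 g2 f1 f2 : R -> R).

(* [v] lies in [H_p] iff [v_t = 2 (p_y v_x - p_x v_y)]; for [p = p_1(s)] and
   [v = p_2(l) - p_1(s)] this is the vanishing of [horiz_defect s l]. *)
Definition horiz_defect s l := l - s + 2 * (g2 l - g1 s) * (f2 l + f1 s).

Lemma in_horiz_pcurveP s l :
  in_horiz (pcurve f1 g1 s) (hsub (pcurve f2 g2 l) (pcurve f1 g1 s)) <->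
  horiz_defect s l = 0.
Proof.
rewrite /in_horiz /hsub /pcurve /Xvec /Yvec /horiz_defect /=; split.
  move=> [a [b [ha hb /eqP ht]]].
  have {}ha : a = f2 l - f1 s by rewrite ha; ring.
  have {}hb : b = g2 l - g1 s by rewrite hb; ring.
  by move: ht; rewrite ha hb -subr_eq0 => /eqP <-; ring.
move=> h; exists (f2 l - f1 s), (g2 l - g1 s); congr (_, _, _); try ring.
by apply/eqP; rewrite -subr_eq0 -h; apply/eqP; ring.
Qed.

Lemma horiz_defect_near_diff {A : set R} {G Lg P Lp : R} :
  bounded_lipschitz A G Lg g1 -> bounded_lipschitz A G Lg g2 ->
  bounded_lipschitz A P Lp f1 -> bounded_lipschitz A P Lp f2 ->
  forall s s' l l', A s -> A s' -> A l -> A l' ->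
  `|horiz_defect s l - horiz_defect s' l' - ((l - l') - (s - s'))|
    <= 4 * (G + Lg) * (P + Lp) * (`|l - l'| + `|s - s'|).
Proof.
move=> [Lg0 bg1 /klipschitzP lg1] [_ bg2 /klipschitzP lg2].
move=> [Lp0 bf1 /klipschitzP lf1] [_ bf2 /klipschitzP lf2] s s' l l' As As' Al Al'.
have G0 : 0 <= G := le_trans (normr_ge0 _) (bg1 s As).
have P0 : 0 <= P := le_trans (normr_ge0 _) (bf1 s As).
have d0 : 0 <= `|l - l'| + `|s - s'| by rewrite addr_ge0.
have -> : horiz_defect s l - horiz_defect s' l' - ((l - l') - (s - s')) =
    2 * ((g2 l - g1 s) * (f2 l + f1 s) - (g2 l' - g1 s') * (f2 l' + f1 s')).
  by rewrite /horiz_defect; ring.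
have hx' : `|g2 l' - g1 s'| <= G + G.
  exact: le_trans (ler_normB _ _) (lerD (bg2 _ Al') (bg1 _ As')).
have hy : `|f2 l + f1 s| <= P + P.
  exact: le_trans (ler_normD _ _) (lerD (bf2 _ Al) (bf1 _ As)).
have hdx : `|(g2 l - g1 s) - (g2 l' - g1 s')| <= Lg * (`|l - l'| + `|s - s'|).
  have -> : (g2 l - g1 s) - (g2 l' - g1 s') = (g2 l - g2 l') - (g1 s - g1 s') by ring.
  by rewrite mulrDr; apply: le_trans (ler_normB _ _) (lerD (lg2 _ _ Al Al') (lg1 _ _ As As')).
have hdy : `|(f2 l + f1 s) - (f2 l' + f1 s')| <= Lp * (`|l - l'| + `|s - s'|).
  have -> : (f2 l + f1 s) - (f2 l' + f1 s') = (f2 l - f2 l') + (f1 s - f1 s') by ring.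
  by rewrite mulrDr; apply: le_trans (ler_normD _ _) (lerD (lf2 _ _ Al Al') (lf1 _ _ As As')).
rewrite normrM ger0_norm //.
have := normBM_le hx' hy hdx hdy.
have := mulr_ge0 (mulr_ge0 G0 P0) d0; have := mulr_ge0 (mulr_ge0 Lg0 Lp0) d0; nra.
Qed.

End Horizontality.

Arguments horiz_defect_near_diff {R g1 g2 f1 f2 A G Lg P Lp}.

Section PerturbedDifference.
Context {R : realType} {tbar z : R} {F : R -> R -> R}.
Local Notation I := (Iclosed tbar).
Hypotheses (tbar_gt0 : 0 < tbar) (z_lt1 : z < 1) (F00 : F 0 0 = 0) (Ftt : F tbar tbar = 0).
Hypothesis F_near_diff : forall s s' l l', I s -> I s' -> I l -> I l' ->
  `|F s l - F s' l' - ((l - l') - (s - s'))| <= z * (`|l - l'| + `|s - s'|).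

Let I0 := Iclosed0 tbar_gt0.
Let It := Iclosed_tbar tbar_gt0.

Lemma near_diff_ge0 : 0 <= z.
Proof.
have := F_near_diff 0 0 tbar 0 I0 I0 It I0.
rewrite ?(subr0, subrr, normr0, addr0) (gtr0_norm tbar_gt0).
by have := normr_ge0 (F 0 tbar - F 0 0 - tbar); have := tbar_gt0; nra.
Qed.

Lemma near_diff_klipschitz_l {s} : I s -> (1 + z).-lipschitz_I (F s).
Proof.
move=> Is; apply/klipschitzP => l l' Il Il'.
have := F_near_diff s s l l' Is Is Il Il'; rewrite subrr subr0 normr0 addr0.
have := ler_normD (F s l - F s l' - (l - l')) (l - l'); rewrite subrK; lra.
Qed.

Lemma near_diff_klipschitz_s {l} : I l -> (1 + z).-lipschitz_I (F^~ l).
Proof.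
move=> Il; apply/klipschitzP => s s' Is Is'.
have := F_near_diff s s' l l Is Is' Il Il; rewrite subrr sub0r opprB normr0 add0r.
have := ler_normD (F s l - F s' l - (s' - s)) (s' - s); rewrite subrK (distrC s'); lra.
Qed.

Lemma near_diff_root_unique {s l l'} : I s -> I l -> I l' -> F s l = 0 -> F s l' = 0 -> l = l'.
Proof.
move=> Is Il Il' Fl Fl'; have := F_near_diff s s l l' Is Is Il Il'.
rewrite Fl Fl' !subrr subr0 sub0r normrN normr0 addr0 => h.
have : `|l - l'| <= 0 by have := normr_ge0 (l - l'); have := z_lt1; nra.
by rewrite normr_le0 subr_eq0 => /eqP.
Qed.

Lemma near_diff_root_exists {s} : I s -> exists2 l, I l & F s l = 0.
Proof.
move=> Is; have /IclosedP/andP[s0 st] := Is.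
have lo : F s 0 <= 0.
  have := F_near_diff s 0 0 0 Is I0 I0 I0.
  rewrite F00 ?(subr0, sub0r, normr0, add0r) (ger0_norm s0) ler_norml => /andP[_ h].
  by have := z_lt1; nra.
have hi : 0 <= F s tbar.
  have e : `|s - tbar| = tbar - s by rewrite distrC ger0_norm // subr_ge0.
  have := F_near_diff s tbar tbar tbar Is It It It.
  rewrite Ftt ?(subrr, subr0, sub0r, normr0, add0r) e ler_norml => /andP[h _].
  by have := z_lt1; nra.
have sign : Num.min (F s 0) (F s tbar) <= 0 <= Num.max (F s 0) (F s tbar).
  by rewrite ge_min le_max lo hi orbT.
have cont := klipschitz_within_continuous (near_diff_klipschitz_l Is).
have [l Il Fl] := IVT (ltW tbar_gt0) cont sign.
by exists l.
Qed.

Definition implicit_fun s := xget 0 [set l | I l /\ F s l = 0].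

Lemma implicit_funP {s} : I s -> I (implicit_fun s) /\ F s (implicit_fun s) = 0.
Proof.
move=> Is; have [l Il Fl] := near_diff_root_exists Is.
by have := xgetPex 0 (ex_intro [set l | I l /\ F s l = 0] l (conj Il Fl)).
Qed.

Lemma implicit_fun_unique {s l} : I s -> I l -> F s l = 0 -> l = implicit_fun s.
Proof.
by move=> Is Il Fl; have [Il' Fl'] := implicit_funP Is; exact: near_diff_root_unique Fl Fl'.
Qed.

Lemma implicit_fun_near_id {s s'} : I s -> I s' ->
  `|(implicit_fun s - implicit_fun s') - (s - s')|
    <= z * (`|implicit_fun s - implicit_fun s'| + `|s - s'|).
Proof.
move=> Is Is'; have [Il Fl] := implicit_funP Is; have [Il' Fl'] := implicit_funP Is'.
by have := F_near_diff s s' _ _ Is Is' Il Il'; rewrite Fl Fl' subrr sub0r normrN.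
Qed.

Lemma implicit_fun_bilipschitz : bilipschitz_on I ((1 - z) / (1 + z)) implicit_fun.
Proof.
move=> s s' Is Is'; have := implicit_fun_near_id Is Is'.
set dl := implicit_fun s - implicit_fun s'; set ds := s - s' => h.
have z0 := near_diff_ge0; have z1 := z_lt1.
have t1 := ler_normD (dl - ds) ds; rewrite subrK in t1.
have t2 := ler_normB dl (dl - ds); rewrite opprB addrC subrK in t2.
rewrite invf_div; apply/andP; split.
  by rewrite mulrAC ler_pdivrMr; nra.
by rewrite mulrAC ler_pdivlMr; nra.
Qed.

Lemma implicit_fun_increasing {s s'} :
  I s -> I s' -> s < s' -> implicit_fun s < implicit_fun s'.
Proof.
move=> Is Is' ss'; rewrite ltNge; apply/negP => hle.
have z1 := z_lt1; have := implicit_fun_near_id Is Is'.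
rewrite (gtr0_norm (x := implicit_fun s - implicit_fun s' - (s - s'))); last by lra.
rewrite (ger0_norm (x := implicit_fun s - implicit_fun s')); last by lra.
by rewrite (ltr0_norm (x := s - s')); nra.
Qed.

Lemma implicit_fun0 : implicit_fun 0 = 0.
Proof. exact/esym/implicit_fun_unique. Qed.

Lemma implicit_fun_tbar : implicit_fun tbar = tbar.
Proof. exact/esym/implicit_fun_unique. Qed.

Lemma implicit_fun_onto {t} : I t -> exists2 s, I s & implicit_fun s = t.
Proof.
move=> It'; have /IclosedP/andP[t0 tt] := It'.
have lo : F tbar t <= 0.
  have e : `|t - tbar| = tbar - t by rewrite distrC ger0_norm // subr_ge0.
  have := F_near_diff tbar tbar t tbar It It It' It.
  rewrite Ftt ?(subrr, subr0, normr0, addr0) e ler_norml => /andP[_ h].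
  by have := z_lt1; nra.
have hi : 0 <= F 0 t.
  have := F_near_diff 0 0 t 0 I0 I0 It' I0.
  rewrite F00 ?(subrr, subr0, normr0, addr0) (ger0_norm t0) ler_norml => /andP[h _].
  by have := z_lt1; nra.
have sign : Num.min (F 0 t) (F tbar t) <= 0 <= Num.max (F 0 t) (F tbar t).
  by rewrite ge_min le_max lo hi orbT.
have cont := klipschitz_within_continuous (near_diff_klipschitz_s It').
have [s Is Fs] := IVT (ltW tbar_gt0) cont sign.
by exists s => //; apply/esym/implicit_fun_unique.
Qed.

Lemma perturbed_difference_bijection :
  exists lam lami : R -> R,
    ((forall s, I s -> I (lam s)) /\ (forall s, I s -> I (lami s)) /\
     (forall s, I s -> lami (lam s) = s /\ lam (lami s) = s) /\
     (forall s s', I s -> I s' -> s < s' -> lam s < lam s') /\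
     is_lip_on lam I /\ is_lip_on lami I) /\
    (forall s, I s -> F s (lam s) = 0) /\
    (forall s l, I s -> I l -> F s l = 0 -> l = lam s) /\
    (lam 0 = 0 /\ lam tbar = tbar) /\
    ((1 - z) / (1 + z) <= lipc lam I <= (1 + z) / (1 - z) /\
     (1 - z) / (1 + z) <= lipc lami I <= (1 + z) / (1 - z)).
Proof.
have z0 := near_diff_ge0; have z1 := z_lt1.
have c0 : 0 < (1 - z) / (1 + z) by apply: divr_gt0; lra.
have lamI s : I s -> I (implicit_fun s) by case/implicit_funP.
have lam_bilip := implicit_fun_bilipschitz.
have [lami [lamiI lamiK lamK lami_bilip]] :=
  bilipschitz_inverse c0 lam_bilip lamI (@implicit_fun_onto).
have t_ne0 : 0 != tbar by rewrite lt_eqF.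
exists implicit_fun, lami; split.
  split; first exact: lamI.
  split; first exact: lamiI.
  split; first by move=> s Is; split; [exact: lamK | exact: lamiK].
  split; first by move=> s s' Is Is'; exact: implicit_fun_increasing.
  by split; [exact: bilipschitz_is_lip lam_bilip | exact: bilipschitz_is_lip lami_bilip].
split; first by move=> s /implicit_funP[].
split; first by move=> s l Is Il; exact: implicit_fun_unique.
split; first by split; [exact: implicit_fun0 | exact: implicit_fun_tbar].
have := lipc_bilipschitz I0 It t_ne0 lam_bilip.
by have := lipc_bilipschitz I0 It t_ne0 lami_bilip; rewrite !invf_div.
Qed.

End PerturbedDifference.

Theorem theorem2p1 (R : realType) (tbar : R) (g1 g2 : R -> R)
  (phi : R * R -> R) :
  0 < tbar ->
  (* gamma_i Lipschitz on I, extended continuously to the closure of I *)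
  is_lip_on g1 (Iopen tbar) -> is_lip_on g2 (Iopen tbar) ->
  {within (Iclosed tbar), continuous g1} -> {within (Iclosed tbar), continuous g2} ->
  (forall s, (Iopen tbar) s -> g1 s < 0 < g2 s) ->
  g1 0 = 0 -> g1 tbar = 0 -> g2 0 = 0 -> g2 tbar = 0 ->
  (* phi continuous on the boundary of D, phi_i Lipschitz on I *)
  {within bdry (domD tbar g1 g2), continuous phi} ->
  let phi1 := fun s => phi (g1 s, s) in
  let phi2 := fun s => phi (g2 s, s) in
  is_lip_on phi1 (Iopen tbar) -> is_lip_on phi2 (Iopen tbar) ->
  let zeta :=
    4 * (Num.max (supnorm g1 (Iopen tbar)) (supnorm g2 (Iopen tbar))
         + Num.max (lipc g1 (Iopen tbar)) (lipc g2 (Iopen tbar)))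
      * (Num.max (supnorm phi1 (Iopen tbar)) (supnorm phi2 (Iopen tbar))
         + Num.max (lipc phi1 (Iopen tbar)) (lipc phi2 (Iopen tbar))) in
  zeta < 1 ->
  let p1 := pcurve phi1 g1 in
  let p2 := pcurve phi2 g2 in
  exists lam lami : R -> R,
    (* lam : [0,tbar] -> [0,tbar] is an increasing bijection with inverse lami,
       both Lipschitz (i.e. lam is bi-Lipschitz) *)
    ((forall s, (Iclosed tbar) s -> (Iclosed tbar) (lam s)) /\
        (forall s, (Iclosed tbar) s -> (Iclosed tbar) (lami s)) /\
        (forall s, (Iclosed tbar) s -> lami (lam s) = s /\ lam (lami s) = s) /\
        (forall s s', (Iclosed tbar) s -> (Iclosed tbar) s' -> s < s' -> lam s < lam s') /\
        is_lip_on lam (Iclosed tbar) /\ is_lip_on lami (Iclosed tbar)) /\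
    (* (i) *)
    (forall s, (Iclosed tbar) s -> in_horiz (p1 s) (hsub (p2 (lam s)) (p1 s))) /\
    (* (ii) *)
    (forall s l, (Iclosed tbar) s -> (Iclosed tbar) l ->
       in_horiz (p1 s) (hsub (p2 l) (p1 s)) -> l = lam s) /\
    (* (iii) *)
    (lam 0 = 0 /\ lam tbar = tbar) /\
    (* (iv) *)
    ((1 - zeta) / (1 + zeta) <= lipc lam (Iclosed tbar) <= (1 + zeta) / (1 - zeta) /\
     (1 - zeta) / (1 + zeta) <= lipc lami (Iclosed tbar) <= (1 + zeta) / (1 - zeta)).
Proof.
move=> t0 lip_g1 lip_g2 cont_g1 cont_g2 g_sign g10 g1t g20 g2t cont_phi phi1 phi2.
move=> lip_f1 lip_f2 zeta zeta_lt1 p1 p2.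
have trace := graph_dense_bdry_trace t0 g_sign cont_phi.
have Bg1 := Iopen_bounds t0 lip_g1 (graph_dense_continuous t0 cont_g1).
have Bg2 := Iopen_bounds t0 lip_g2 (graph_dense_continuous t0 cont_g2).
have Bf1 := Iopen_bounds t0 lip_f1 (trace g1 g10 g1t cont_g1 (bdry_domD_graph1 g_sign)).
have Bf2 := Iopen_bounds t0 lip_f2 (trace g2 g20 g2t cont_g2 (bdry_domD_graph2 g_sign)).
have max_l (x y : R) : x <= Num.max x y by rewrite le_max lexx.
have max_r (x y : R) : y <= Num.max x y by rewrite le_max lexx orbT.
have near_diff := horiz_defect_near_diff
  (bounded_lipschitz_le (max_l _ _) (max_l _ _) Bg1)
  (bounded_lipschitz_le (max_r _ _) (max_r _ _) Bg2)
  (bounded_lipschitz_le (max_l _ _) (max_l _ _) Bf1)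
  (bounded_lipschitz_le (max_r _ _) (max_r _ _) Bf2).
have F00 : horiz_defect g1 g2 phi1 phi2 0 0 = 0 by rewrite /horiz_defect g10 g20; ring.
have Ftt : horiz_defect g1 g2 phi1 phi2 tbar tbar = 0 by rewrite /horiz_defect g1t g2t; ring.
have [lam [lami [bij [horiz [unique rest]]]]] :=
  perturbed_difference_bijection t0 zeta_lt1 F00 Ftt near_diff.
exists lam, lami; split=> //; split.
  by move=> s Is; apply/in_horiz_pcurveP; exact: horiz.
by split=> // s l Is Il /in_horiz_pcurveP; exact: unique.
Qed.
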